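(* Let $p\ge 2$, let $\alpha_1,\dots,\alpha_p,c$ be real numbers, and let $B$ be the $p\times p$ symmetric matrix with diagonal entries $\alpha_1,\dots,\alpha_p$ and all off-diagonal entries equal to $c$. For $k=1,\dots,p$ let $d_k(c)$ denote the $k$-th leading principal minor of $B$ (determinant of the upper-left $k\times k$ submatrix). Then $d_k$ is a polynomial in $c$ of degree $k$ given by $$d_k(c)=\prod_{m=1}^k(\alpha_m-c)+c\sum_{m=1}^k\ \prod_{\substack{1\le \ell\le k\\ \ell\ne m}}(\alpha_\ell-c).$$ Assume furthermore that $0<\alpha_1\le\alpha_2\le\dots\le\alpha_p<1$. Then for each $k\in\{2,\dots,p\}$ all roots of $d_k$ are real; denoting them $r_{k,1}\le r_{k,2}\le\dots\le r_{k,k}$ (with multiplicity), they interlace with the $\alpha$'s: $$r_{k,1}<0<\alpha_1\le r_{k,2}\le\alpha_2\le\dots\le r_{k,k}\le\alpha_k<1,$$ and moreover $$-\sqrt{\alpha_1\alpha_2}=r_{2,1}\le r_{3,1}\le\dots\le r_{k,1}<0<r_{k,2}\le\dots\le r_{3,2}\le r_{2,2}=\sqrt{\alpha_1\alpha_2}.$$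
   Context: Since reordering the $\alpha$'s (with the corresponding simultaneous permutation of rows and columns) does not change $\det B=d_p(c)$, the roots $r_{p,1}$, $r_{p,2}$ of $d_p$ are the same for any ordering; the sorted order $\alpha_1\le\dots\le\alpha_p$ is assumed for the statements about the leading minors $d_k$, $k<p$. *)

From HB Require Import structures.
From mathcomp Require Import all_boot all_order all_algebra.
Set Implicit Arguments. Unset Strict Implicit. Unset Printing Implicit Defensive.
Import Order.TTheory GRing.Theory Num.Theory.
Local Open Scope ring_scope.

(* The p x p matrix B with diagonal alpha_1,...,alpha_p (1-based: row i : 'I_p
   carries alpha (i+1)) and all off-diagonal entries equal to c. *)
Definition Bmat (R : nzRingType) (p : nat) (alpha : nat -> R) (c : R) : 'M[R]_p :=
  \matrix_(i < p, j < p) (if i == j then alpha i.+1 else c).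

Definition lead_minor (R : comNzRingType) (p : nat) (A : 'M[R]_p) (k : nat)
  (hk : (k <= p)%N) : R :=
  \det (mxsub (widen_ord hk) (widen_ord hk) A).

Definition dpoly (R : comNzRingType) (p : nat) (alpha : nat -> R) (k : nat)
  (hk : (k <= p)%N) : {poly R} :=
  lead_minor (Bmat p (fun i => (alpha i)%:P) 'X) hk.

Definition dformula (R : comNzRingType) (alpha : nat -> R) (k : nat) : {poly R} :=
  \prod_(1 <= m < k.+1) ((alpha m)%:P - 'X)
  + 'X * \sum_(1 <= m < k.+1) \prod_(1 <= l < k.+1 | l != m) ((alpha l)%:P - 'X).

From HB Require Import structures.
From mathcomp Require Import all_boot all_order all_algebra.
From mathcomp Require Import polyrcf.
From mathcomp Require Import ring lra zify.
Import Order.TTheory GRing.Theory Num.Theory.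
Set Implicit Arguments. Unset Strict Implicit. Unset Printing Implicit Defensive.
Local Open Scope ring_scope.

(* Expanding the last row of B gives d_(k+1) = (alpha_(k+1) - c) d_k + c P_k with
   P_k = prod_(m <= k) (alpha_m - c), the recursion of the closed formula; equivalently
   d_k = P_k - c P_k'.  The k roots are located by sign changes: d_k(-1) < 0 < d_k(0) gives a
   negative root, and between consecutive distinct values v < w of the alpha's, dividing d_k by
   the powers of (v - c) and (w - c) it shares with P_k leaves a cofactor of opposite signs at v
   and w.  A value taken n times by the alpha's is a root of d_k of multiplicity n - 1, so these
   roots exhaust the degree k.  At a root of d_k one has d_(k+1) = c P_k, whose sign pushes the
   two roots of d_(k+1) closest to 0 towards 0. *)

(** * The closed formula and the determinant *)

Section ClosedFormula.
Variables (R : comNzRingType) (a : nat -> R).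

Definition shifted_prod (c : R) (k : nat) : R := \prod_(1 <= m < k.+1) (a m - c).

Definition shifted_esum (c : R) (k : nat) : R :=
  \sum_(1 <= m < k.+1) \prod_(1 <= l < k.+1 | l != m) (a l - c).

Definition dform (c : R) (k : nat) : R := shifted_prod c k + c * shifted_esum c k.

Lemma shifted_prod0 c : shifted_prod c 0 = 1.
Proof. by rewrite /shifted_prod big_geq. Qed.

Lemma shifted_prodS c k : shifted_prod c k.+1 = shifted_prod c k * (a k.+1 - c).
Proof. by rewrite /shifted_prod big_nat_recr. Qed.

Lemma shifted_esum0 c : shifted_esum c 0 = 0.
Proof. by rewrite /shifted_esum big_geq. Qed.

Lemma shifted_esumS c k :
  shifted_esum c k.+1 = shifted_esum c k * (a k.+1 - c) + shifted_prod c k.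
Proof.
rewrite /shifted_esum /shifted_prod big_nat_recr //= mulr_suml; congr (_ + _).
  apply: eq_big_nat => m /andP [_ hm].
  by rewrite big_mkcond big_nat_recr //= -big_mkcond /= gtn_eqF.
rewrite big_mkcond big_nat_recr //= eqxx mulr1 -big_mkcond /=.
rewrite big_nat_cond [RHS]big_nat_cond; apply: eq_bigl => l.
by case: (ltnP l k.+1) => hl; rewrite ?andbF ?andbT //= (ltn_eqF hl) andbT.
Qed.

Lemma dform0 c : dform c 0 = 1.
Proof. by rewrite /dform shifted_prod0 shifted_esum0 mulr0 addr0. Qed.

Lemma dformS c k : dform c k.+1 = (a k.+1 - c) * dform c k + c * shifted_prod c k.
Proof. by rewrite /dform shifted_prodS shifted_esumS; ring. Qed.

End ClosedFormula.

Lemma Bmat_mxsub (R : comNzRingType) p (a : nat -> R) c k (hk : (k <= p)%N) :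
  mxsub (widen_ord hk) (widen_ord hk) (Bmat p a c) = Bmat k a c.
Proof.
apply/matrixP => i j; rewrite !mxE /=.
by have -> : (widen_ord hk i == widen_ord hk j) = (i == j).
Qed.

Lemma det_Bmat_lastrow1 (R : comNzRingType) (a : nat -> R) c k :
  \det (\matrix_(i < k.+1, j < k.+1)
          (if i == ord_max then 1 else if i == j then a i.+1 else c)) =
  shifted_prod a c k.
Proof.
set C := \matrix_(i, j) _.
(* subtracting c times the last row from the others leaves a triangular matrix *)
pose T : 'M[R]_k.+1 := \matrix_(i, j)
  (if i == ord_max then 1 else if i == j then a i.+1 - c else 0).
pose N : 'M[R]_k.+1 := \matrix_(i, j) (if (i != ord_max) && (j == ord_max) then c else 0).
have lower_ij (M : 'M[R]_k.+1) :
    (forall i j : 'I_k.+1, (i < j)%N -> M i j = 0) -> \det M = \prod_i M i i.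
  move=> M0; apply: det_trig; apply/forallP => i; apply/forallP => j.
  by apply/implyP => /M0 ->.
have ET : C = (1%:M + N) *m T.
  apply/matrixP => i j; rewrite mulmxDl mul1mx !mxE.
  rewrite (bigD1 ord_max) //= big1 => [|l hl]; last by rewrite !mxE (negbTE hl) andbF mul0r.
  rewrite !mxE eqxx andbT addr0.
  case: (i == ord_max) => /=; first by rewrite mul0r addr0.
  by rewrite mulr1; case: (i == j); ring.
have last_row_gt (i j : 'I_k.+1) : (i < j)%N -> (i == ord_max) = false.
  by move=> hij; apply/eqP => Ei; move: hij; rewrite Ei /= ltnNge -ltnS ltn_ord.
have ord_ltn_eqF (i j : 'I_k.+1) : (i < j)%N -> (i == j) = false.
  by move=> hij; rewrite -val_eqE ltn_eqF.
rewrite ET det_mulmx -det_tr !lower_ij => [|i j hij|i j hij]; first last.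
- by rewrite !mxE (last_row_gt _ _ hij) eq_sym ord_ltn_eqF // andbF addr0.
- by rewrite !mxE (last_row_gt _ _ hij) ord_ltn_eqF.
rewrite big1 => [|i _]; last by rewrite !mxE eqxx /=; case: (i == ord_max); rewrite /= addr0.
rewrite mul1r big_ord_recr /= !mxE eqxx mulr1 /shifted_prod big_add1 /= big_mkord.
apply: eq_bigr => i _; rewrite !mxE eqxx.
by rewrite (ord_ltn_eqF (widen_ord (leqnSn k) i) ord_max (ltn_ord i)).
Qed.

Lemma det_Bmat (R : comNzRingType) (a : nat -> R) c k : \det (Bmat k a c) = dform a c k.
Proof.
elim: k => [|k IH]; first by rewrite det_mx00 dform0.
(* the last row of [Bmat k.+1] is (a_(k+1) - c) e_(k+1) + c (1, ..., 1) *)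
pose B : 'M[R]_k.+1 := \matrix_(i, j)
  (if i == ord_max then (i == j)%:R else Bmat k.+1 a c i j).
pose C : 'M[R]_k.+1 := \matrix_(i, j) (if i == ord_max then 1 else Bmat k.+1 a c i j).
have other_rows i : (lift ord_max i == ord_max :> 'I_k.+1) = false.
  by apply/negbTE; rewrite eq_sym neq_lift.
rewrite (@determinant_multilinear _ _ _ B C ord_max (a k.+1 - c) c); first last.
- by apply/matrixP => i j; rewrite !mxE other_rows.
- by apply/matrixP => i j; rewrite !mxE other_rows.
- by apply/matrixP => i j; rewrite !mxE !eqxx eq_sym; case: (j == ord_max); rewrite /=; ring.
rewrite dformS -det_Bmat_lastrow1 -IH; congr (_ * _ + _ * _); last first.
  by congr (\det _); apply/matrixP => i j; rewrite !mxE; case: (i =P ord_max).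
rewrite (expand_det_row _ ord_max) (bigD1 ord_max) //= big1 => [|j hj]; last first.
  by rewrite !mxE eqxx eq_sym (negbTE hj) mul0r.
rewrite !mxE !eqxx mul1r addr0 /cofactor -signr_odd addnn odd_double mul1r.
congr (\det _); apply/matrixP => i j; rewrite !mxE other_rows.
by rewrite (inj_eq (@lift_inj _ ord_max)) !lift_max.
Qed.

Lemma dformula_dform (R : comNzRingType) (alpha : nat -> R) k :
  dformula alpha k = dform (fun i => (alpha i)%:P) 'X k.
Proof. by []. Qed.

Lemma horner_dformula (R : comNzRingType) (alpha : nat -> R) k x :
  (dformula alpha k).[x] = dform alpha x k.
Proof.
rewrite /dformula hornerD hornerM hornerX horner_prod horner_sum /dform.
congr (_ + _ * _); first by apply: eq_bigr => i _; rewrite !hornerE.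
by apply: eq_bigr => i _; rewrite horner_prod; apply: eq_bigr => j _; rewrite !hornerE.
Qed.

Lemma dpoly_dformula (R : comNzRingType) p (alpha : nat -> R) k (hk : (k <= p)%N) :
  dpoly alpha hk = dformula alpha k.
Proof. by rewrite /dpoly /lead_minor Bmat_mxsub det_Bmat. Qed.

Lemma horner_dpoly (R : comNzRingType) p (alpha : nat -> R) k (hk : (k <= p)%N) c :
  (dpoly alpha hk).[c] = lead_minor (Bmat p alpha c) hk.
Proof. by rewrite dpoly_dformula horner_dformula /lead_minor Bmat_mxsub det_Bmat. Qed.

(** * Degree *)

Section Degree.
Variables (R : comNzRingType) (alpha : nat -> R).
Implicit Types (q : {poly R}) (n : nat).

Lemma size_coef_CsubX_mul (c : R) q n : (size q <= n.+1)%N ->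
  (size ((c%:P - 'X) * q)%R <= n.+2)%N /\ ((c%:P - 'X) * q)`_n.+1 = - q`_n.
Proof.
move=> hq; split.
  by apply: leq_trans (size_polyMleq _ _) _; rewrite -opprB size_polyN size_XsubC.
by rewrite mulrBl coefB coefCM coefXM (nth_default 0 hq) mulr0 sub0r.
Qed.

Lemma size_coef_X_mul q n : (size q <= n.+1)%N ->
  (size ('X * q)%R <= n.+2)%N /\ ('X * q)`_n.+1 = q`_n.
Proof.
move=> hq; rewrite coefXM; split => //.
by apply: leq_trans (size_polyMleq _ _) _; rewrite size_polyX.
Qed.

Let P k := shifted_prod (fun i => (alpha i)%:P) 'X k.

Lemma size_coef_shifted_prod k : (size (P k) <= k.+1)%N /\ (P k)`_k = (-1) ^+ k.
Proof.
elim: k => [|k [hs hc]]; first by rewrite /P shifted_prod0 size_poly1 coef1.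
have [hs' hc'] := size_coef_CsubX_mul (alpha k.+1) hs.
by rewrite /P shifted_prodS mulrC; split => //; rewrite hc' hc exprS mulN1r.
Qed.

Lemma size_coef_dformula k :
  (size (dformula alpha k) <= k.+1)%N /\ (dformula alpha k)`_k = (-1) ^+ k * (1 - k%:R).
Proof.
elim: k => [|k [hs hc]]; first by rewrite dformula_dform dform0 size_poly1 coef1 subr0 mulr1.
have [hsP hcP] := size_coef_shifted_prod k.
have [hs1 hc1] := size_coef_CsubX_mul (alpha k.+1) hs.
have [hs2 hc2] := size_coef_X_mul hsP.
rewrite !dformula_dform dformS -!dformula_dform -/(P k); split.
  by apply: leq_trans (size_polyD _ _) _; rewrite geq_max hs1.
rewrite coefD hc1 hc2 hc hcP exprS -addn1 natrD; ring.
Qed.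
End Degree.

Lemma size_dformula (R : numDomainType) (alpha : nat -> R) k : (2 <= k)%N ->
  size (dformula alpha k) = k.+1.
Proof.
move=> hk; have [hs hc] := size_coef_dformula alpha k.
apply/anti_leq; rewrite hs /= ltnNge; apply/negP => /leq_sizeP /(_ k (leqnn k)).
rewrite hc => /eqP; rewrite mulf_eq0 signr_eq0 subr_eq0 eq_sym pnatr_eq1 /=.
by case: k hk {hs hc} => [|[]].
Qed.

(** * Multiplicities *)

Lemma sub_in_count (T : eqType) (a1 a2 : pred T) (s : seq T) :
  {in s, subpred a1 a2} -> (count a1 s <= count a2 s)%N.
Proof.
elim: s => [//|x s IH] H /=; apply: leq_add.
  by case h1: (a1 x) => //; rewrite (H x) ?mem_head.
by apply: IH => y hy; apply: H; rewrite in_cons hy orbT.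
Qed.

Lemma count_le1 (T : eqType) (a : pred T) (s : seq T) : uniq s ->
  {in s &, forall x y, a x -> a y -> x = y} -> (count a s <= 1)%N.
Proof.
elim: s => [//|x s IH] /= /andP [hx hu] H.
case hax: (a x) => /=.
  rewrite add1n ltnS leqn0 eqn0Ngt -has_count; apply/hasPn => y hy; apply/negP => hay.
  by move: hx; rewrite (H x y) ?mem_head ?in_cons ?hy ?orbT.
by apply: IH => // u v hu' hv'; apply: H; rewrite in_cons ?hu' ?hv' orbT.
Qed.

(* The repeats [a j = a (j+1) = y], j < k, inject into the indices l <> m, l <= k, with
   [a l = y]: send j to j if j < m and to j+1 otherwise. *)
Lemma count_repeats_le (T : eqType) (a : nat -> T) y k m : (1 <= m <= k)%N ->
  (count (fun j => (a j == a j.+1) && (a j == y)) (iota 1 k.-1) <=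
   count (fun l => (l != m) && (a l == y)) (index_iota 1 k.+1))%N.
Proof.
move=> /andP [hm1 hmk].
have e1 : iota 1 k.-1 = iota 1 m.-1 ++ iota m (k - m).
  have -> : k.-1 = (m.-1 + (k - m))%N by lia.
  by rewrite iotaD; congr (_ ++ iota _ _); lia.
have e2 : index_iota 1 k.+1 = iota 1 m.-1 ++ m :: [seq j.+1 | j <- iota m (k - m)].
  have -> : [seq j.+1 | j <- iota m (k - m)] = iota m.+1 (k - m) by rewrite -(iotaDl 1).
  rewrite /index_iota subn1 /= -/(iota m (k - m).+1).
  have -> : k = (m.-1 + (k - m).+1)%N by lia.
  by rewrite iotaD; congr (_ ++ iota _ _); lia.
rewrite e1 e2 !count_cat /= eqxx /= add0n count_map; apply: leq_add.
  apply: sub_in_count => j; rewrite mem_iota => /andP [_ hj] /andP [_ ->].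
  by rewrite andbT; apply: contraTneq hj => ->; rewrite -(prednK hm1) add1n ltnn.
apply: sub_in_count => j; rewrite mem_iota => /andP [hj _] /andP [/eqP E1 /eqP E2] /=.
by rewrite -E1 E2 eqxx andbT gtn_eqF.
Qed.

Lemma prod_CsubX_split (R : comNzRingType) (a : nat -> R) (s : seq nat) (P : pred nat) y :
  \prod_(l <- s | P l) ((a l)%:P - 'X) =
  (y%:P - 'X) ^+ count (fun l => P l && (a l == y)) s *
  \prod_(l <- s | P l && (a l != y)) ((a l)%:P - 'X).
Proof.
elim: s => [|x s IH]; first by rewrite !big_nil mulr1.
rewrite !big_cons /=; case: (P x) => /=; last by rewrite IH.
case: (a x =P y) => [->|_] /=; rewrite IH; last by rewrite add0n mulrCA.
by rewrite exprS mulrA.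
Qed.

Lemma XsubC_exp_dvd_prod (R : idomainType) (a : nat -> R) (s : seq nat) (P : pred nat) y :
  ('X - y%:P) ^+ count (fun l => P l && (a l == y)) s %| \prod_(l <- s | P l) ((a l)%:P - 'X).
Proof.
rewrite (prod_CsubX_split a s P y) -[_ - y%:P]opprB exprNn -signr_odd.
case: (odd _); rewrite ?expr0 ?mul1r ?expr1 ?mulN1r ?dvdpNl; exact: dvdp_mulr (dvdpp _).
Qed.

Lemma prod_XsubC_dvdp (R : fieldType) (r : seq R) (q : {poly R}) :
  (forall y, ('X - y%:P) ^+ count_mem y r %| q) -> \prod_(x <- r) ('X - x%:P) %| q.
Proof.
elim: r q => [|x s IH] q H; first by rewrite big_nil dvd1p.
have Hx := H x; rewrite /= eqxx add1n exprS in Hx.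
have hx : ('X - x%:P) %| q by apply: dvdp_trans Hx; apply: dvdp_mulIl.
rewrite -(divpK hx) big_cons mulrC; apply: dvdp_mul; last exact: dvdpp.
apply: IH => y; case: (y =P x) => [->|/eqP hyx].
  by rewrite -(@dvdp_mul2r _ ('X - x%:P)) ?polyXsubC_eq0 // divpK // -exprSr exprS.
have := H y; rewrite /= eq_sym (negbTE hyx) add0n -{1}(divpK hx) Gauss_dvdpl //.
by apply: coprimep_expl; rewrite coprimep_XsubC rootE !hornerE subr_eq0 eq_sym.
Qed.

Lemma prod_XsubC_dvdp_eq (R : fieldType) (r : seq R) (q : {poly R}) :
  \prod_(x <- r) ('X - x%:P) %| q -> size q = (size r).+1 ->
  q = lead_coef q *: \prod_(x <- r) ('X - x%:P).
Proof.
move=> hd hs; have := dvdp_size_eqp hd; rewrite size_prod_XsubC hs eqxx eqp_sym.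
by move=> /esym /eqpfP ->; rewrite lead_coefZ (monicP (monic_prod_XsubC _ _ _)) !mulr1 divr1.
Qed.

Lemma dformula_sub_X_deriv (R : comNzRingType) (alpha : nat -> R) k :
  let P := shifted_prod (fun i => (alpha i)%:P) 'X k in
  dformula alpha k = P - 'X * P^`().
Proof.
have esum_deriv j : shifted_esum (fun i => (alpha i)%:P) 'X j =
                    - (shifted_prod (fun i => (alpha i)%:P) 'X j)^`().
  elim: j => [|j IH]; first by rewrite shifted_esum0 shifted_prod0 derivC oppr0.
  by rewrite shifted_esumS shifted_prodS derivM IH derivB derivC derivX; ring.
by rewrite /= dformula_dform /dform esum_deriv mulrN.
Qed.

Lemma CsubX_exp_mul_sub_X_deriv (R : comNzRingType) (v w : R) (G : {poly R}) n m :
  let A := v%:P - 'X in let B := w%:P - 'X in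
  let Q := A ^+ n.+1 * B ^+ m.+1 * G in
  Q - 'X * Q^`() = A ^+ n * B ^+ m *
    (A * B * G + 'X * (n.+1%:R * B * G + m.+1%:R * A * G - A * B * G^`())).
Proof.
move=> A B Q; have dA : A^`() = -1 by rewrite derivB derivC derivX sub0r.
have dB : B^`() = -1 by rewrite derivB derivC derivX sub0r.
rewrite /Q !derivM !deriv_exp dA dB !succnK -(mulr_natr _ n.+1) -(mulr_natr _ m.+1) !exprS.
clearbody A B; move: (A ^+ n) (B ^+ m) (G^`()) 'X n.+1%:R m.+1%:R => An Bm G' X N M.
ring.
Qed.

(* The cofactor H has the signs of v (n+1) (w - v) G(v) and w (m+1) (v - w) G(w) at the
   two ends, so it vanishes in between. *)
Lemma CsubX_exp_mul_sub_X_deriv_root (R : rcfType) (v w : R) (G : {poly R}) n m :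
  0 < v -> v < w -> 0 < G.[v] * G.[w] ->
  let Q := (v%:P - 'X) ^+ n.+1 * (w%:P - 'X) ^+ m.+1 * G in
  exists2 x, (x \in `]v, w[) & root (Q - 'X * Q^`()) x.
Proof.
move=> v_gt0 vw G_pos Q; rewrite /Q CsubX_exp_mul_sub_X_deriv.
set H := (_ + _ * _).
have Hv : H.[v] = v * n.+1%:R * (w - v) * G.[v].
  by rewrite /H -!polyC_natr !hornerE; ring.
have Hw : H.[w] = w * m.+1%:R * (v - w) * G.[w].
  by rewrite /H -!polyC_natr !hornerE; ring.
have H_sign : H.[v] * H.[w] < 0.
  have n_pos : 0 < (n.+1%:R : R) by rewrite ltr0n.
  have m_pos : 0 < (m.+1%:R : R) by rewrite ltr0n.
  rewrite Hv Hw; set g := G.[v] * G.[w] in G_pos.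
  have -> : v * n.+1%:R * (w - v) * G.[v] * (w * m.+1%:R * (v - w) * G.[w]) =
            - (v * w * (n.+1%:R * m.+1%:R) * ((w - v) * (w - v)) * g) by rewrite /g; ring.
  rewrite oppr_lt0; apply: (mulr_gt0 _ G_pos); rewrite !mulr_gt0 // ?subr_gt0 //; lra.
have [x hx rx] := poly_ivtoo (ltW vw) H_sign.
by exists x => //; rewrite rootM rx orbT.
Qed.

Lemma repeats_dvd_dformula (R : idomainType) (alpha : nat -> R) k y : (1 <= k)%N ->
  ('X - y%:P) ^+ count (fun j => (alpha j == alpha j.+1) && (alpha j == y)) (iota 1 k.-1)
  %| dformula alpha k.
Proof.
move=> hk; rewrite /dformula; apply: dvdp_add.
  apply: dvdp_trans (dvdp_exp2l _ _) (XsubC_exp_dvd_prod alpha _ predT y).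
  apply: leq_trans (@count_repeats_le _ alpha y k 1 _) _; first by rewrite hk.
  by apply: sub_count => l /andP [_ ->].
apply: dvdp_mull; rewrite big_seq; apply: (big_ind (fun q => _ %| q)) => [|q1 q2|m].
- exact: dvdp0.
- exact: dvdp_add.
rewrite mem_index_iota ltnS => hm.
exact: dvdp_trans (dvdp_exp2l _ (count_repeats_le alpha y hm)) (XsubC_exp_dvd_prod _ _ _ _).
Qed.

(** * Location of the roots *)

Lemma dform2 (R : comNzRingType) (a : nat -> R) c : dform a c 2 = a 1%N * a 2%N - c ^+ 2.
Proof. by rewrite !dformS dform0 shifted_prodS shifted_prod0; ring. Qed.

Lemma dformula_neq0 (R : numDomainType) (alpha : nat -> R) k : (2 <= k)%N ->
  dformula alpha k != 0.
Proof. by move=> hk; rewrite -size_poly_eq0 size_dformula. Qed.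

Lemma head_roots (R : rcfType) (q : {poly R}) a b x0 :
  q != 0 -> (exists2 x, (x \in `]a, b[) & root q x) ->
  (head x0 (roots q a b) \in `]a, b[) /\ root q (head x0 (roots q a b)).
Proof.
move=> q0 [x hx rx]; have := root_in_roots q0 hx rx.
have hin := @roots_in _ q a b; have hroot := @root_roots _ q a b.
by case: (roots q a b) hin hroot => // y s hin hroot _; rewrite /= hin ?hroot ?mem_head.
Qed.

Section RootLocation.
Variables (R : rcfType) (alpha : nat -> R).

(* [gap_root k j] is the least root of [d_k] in ]alpha_j, alpha_(j+1)[, or alpha_j itself
   when that interval is empty; [neg_root k] is the least root of [d_k] in ]-1, 0[. *)
Definition neg_root k := head 0 (roots (dformula alpha k) (-1) 0).
Definition gap_root k j := head (alpha j) (roots (dformula alpha k) (alpha j) (alpha j.+1)).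
Definition root_seq k := neg_root k :: [seq gap_root k j | j <- iota 1 k.-1].

Lemma gap_root_flat k j : alpha j.+1 <= alpha j -> gap_root k j = alpha j.
Proof. by move=> hle; rewrite /gap_root rootsEba. Qed.

Lemma size_root_seq k : (1 <= k)%N -> size (root_seq k) = k.
Proof. by move=> hk; rewrite /= size_map size_iota prednK. Qed.

Lemma nth_root_seq k j : (1 <= j < k)%N -> nth 0 (root_seq k) j = gap_root k j.
Proof. by case: j => // j /andP [_ hj] /=; rewrite (nth_map 0%N) ?size_iota ?nth_iota //; lia. Qed.

Lemma mem_root_seqP k x : x \in root_seq k ->
  x = neg_root k \/ exists2 j, (1 <= j < k)%N & x = gap_root k j.
Proof.
rewrite in_cons => /orP [/eqP ->|/mapP [j hj ->]]; [left | right] => //.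
by exists j => //; move: hj; rewrite mem_iota; lia.
Qed.

Variable p : nat.
Hypothesis alpha1_gt0 : 0 < alpha 1%N.
Hypothesis alpha_step : forall i, (1 <= i < p)%N -> alpha i <= alpha i.+1.
Hypothesis alphap_lt1 : alpha p < 1.

Lemma alpha_le i j : (1 <= i)%N -> (i <= j <= p)%N -> alpha i <= alpha j.
Proof.
move=> hi /andP [hij hjp]; elim: j hij hjp => [|j IH] hij hjp; first by case: i hi hij.
have [->|hne] := eqVneq i j.+1; first exact: lexx.
by apply: le_trans (IH _ _) (alpha_step _); lia.
Qed.

Lemma alpha_gt0 i : (1 <= i <= p)%N -> 0 < alpha i.
Proof. by move=> hi; apply: lt_le_trans alpha1_gt0 (alpha_le _ _). Qed.

Lemma alpha_lt1 i : (1 <= i <= p)%N -> alpha i < 1.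
Proof. by case/andP=> hi hip; apply: le_lt_trans alphap_lt1; rewrite alpha_le ?hip ?leqnn. Qed.

Lemma shifted_prod_gt0 x k : (k <= p)%N -> x < alpha 1%N -> 0 < shifted_prod alpha x k.
Proof.
move=> hkp hx; rewrite /shifted_prod big_seq; apply: prodr_gt0 => m.
rewrite mem_index_iota subr_gt0 => hm; apply: lt_le_trans hx (alpha_le _ _) => //; lia.
Qed.

Lemma dform0_gt0 k : (k <= p)%N -> 0 < dform alpha 0 k.
Proof. by move=> hkp; rewrite /dform mul0r addr0 shifted_prod_gt0. Qed.

Lemma dform_alpha1_ge0 k : (1 <= k <= p)%N -> 0 <= dform alpha (alpha 1%N) k.
Proof.
elim: k => [//|[|k] IH] hk.
  by rewrite dformS dform0 shifted_prod0 subrr mul0r add0r mulr1 ltW.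
rewrite dformS /shifted_prod big_ltn // subrr mul0r mulr0 addr0.
by rewrite mulr_ge0 ?subr_ge0 ?alpha_le ?IH //; lia.
Qed.

(* d_k(-1) = P(-1) - S(-1) where each factor alpha_l + 1 of P(-1) lies in (1, 2); hence
   P(-1) < 2 Q_m for each of the k products Q_m summing to S(-1), and k P(-1) < 2 S(-1). *)
Lemma dformN1_lt0 k : (2 <= k <= p)%N -> dform alpha (-1) k < 0.
Proof.
case/andP=> hk2 hkp.
set P := shifted_prod alpha (-1) k.
have P_lt m : (1 <= m < k.+1)%N ->
    P < 2 * \prod_(1 <= l < k.+1 | l != m) (alpha l - -1).
  move=> hm; have [am0 am1] : 0 < alpha m /\ alpha m < 1.
    by split; [apply: alpha_gt0 | apply: alpha_lt1]; lia.
  have Q_gt0 : 0 < \prod_(1 <= l < k.+1 | l != m) (alpha l - -1).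
    rewrite big_seq_cond; apply: prodr_gt0 => l /andP [].
    rewrite mem_index_iota => hl _; have : 0 < alpha l by apply: alpha_gt0; lia.
    by move=> ?; lra.
  rewrite /P /shifted_prod (bigD1_seq m) ?mem_index_iota ?iota_uniq //=.
  by set Q := \prod_(_ <- _ | _) _ in Q_gt0 *; nra.
have sum_lt : P *+ k < 2 * shifted_esum alpha (-1) k.
  have := ltr_sum_nat _ P_lt; rewrite ltnS (ltnW hk2) => /(_ isT).
  by rewrite sumr_const_nat subn1 /= -mulr_sumr.
have P_gt0 : 0 < P by apply: shifted_prod_gt0 hkp _; move: alpha1_gt0; lra.
have : P * 2 <= P * k%:R by apply: ler_wpM2l; [exact: ltW | rewrite (ler_nat R 2 k)].
by rewrite /dform -/P; move: sum_lt; rewrite -mulr_natr; lra.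
Qed.

Lemma gap_root_exists k j : (1 <= j)%N -> (j < k <= p)%N -> alpha j < alpha j.+1 ->
  exists2 x, (x \in `]alpha j, alpha j.+1[) & root (dformula alpha k) x.
Proof.
move=> hj1 /andP [hjk hkp] hvw.
set v := alpha j in hvw *; set w := alpha j.+1 in hvw *.
set s := index_iota 1 k.+1.
have EP := prod_CsubX_split alpha s predT v.
rewrite (prod_CsubX_split alpha s (fun l => true && (alpha l != v)) w) in EP.
set n := count _ s in EP; set m := count _ s in EP.
set G := \prod_(l <- s | _ && (alpha l != w)) _ in EP.
have n_gt0 : (0 < n)%N.
  rewrite -has_count; apply/hasP; exists j; rewrite ?mem_index_iota /= ?eqxx //; lia.
have m_gt0 : (0 < m)%N.
  rewrite -has_count; apply/hasP; exists j.+1; last by rewrite /= eqxx andbT gt_eqF.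
  by rewrite mem_index_iota; lia.
(* the remaining alpha_l lie outside [v, w] *)
have G_pos : 0 < G.[v] * G.[w].
  rewrite /G !horner_prod -big_split /= big_seq_cond; apply: prodr_gt0 => l.
  rewrite mem_index_iota /= -!andbA => /and4P [hl0 hlk hlv hlw]; rewrite !hornerE.
  case: (leqP l j) => hlj.
    have : alpha l < v by rewrite lt_neqAle hlv alpha_le //; lia.
    by move=> hlt; nra.
  have : w < alpha l by rewrite lt_neqAle eq_sym hlw alpha_le //; lia.
  by move=> hlt; nra.
have v_gt0 : 0 < v by apply: alpha_gt0; lia.
have [x hx rx] := CsubX_exp_mul_sub_X_deriv_root n.-1 m.-1 v_gt0 hvw G_pos.
exists x => //; rewrite dformula_sub_X_deriv /=.
suff -> : shifted_prod (fun i => (alpha i)%:P) 'X k =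
          (v%:P - 'X) ^+ n.-1.+1 * (w%:P - 'X) ^+ m.-1.+1 * G by [].
by rewrite !prednK // -mulrA; exact: EP.
Qed.

Lemma neg_rootP k : (2 <= k <= p)%N ->
  neg_root k < 0 /\ root (dformula alpha k) (neg_root k).
Proof.
case/andP=> hk2 hkp.
have sign : (dformula alpha k).[-1] * (dformula alpha k).[0] < 0.
  by rewrite !horner_dformula pmulr_llt0 ?dform0_gt0 ?dformN1_lt0 ?hk2.
have [] := @head_roots _ _ (-1) 0 0 (dformula_neq0 alpha hk2).
  by have [x] := poly_ivtoo (lerN10 R) sign; exists x.
by rewrite in_itv /= => /andP [_ ->].
Qed.

Lemma gap_root_strict k j : (1 <= j)%N -> (j < k <= p)%N -> alpha j < alpha j.+1 ->
  alpha j < gap_root k j < alpha j.+1 /\ root (dformula alpha k) (gap_root k j).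
Proof.
move=> hj hjk hlt; have k_ge2 : (2 <= k)%N by case/andP: hjk => ? _; lia.
have [] := head_roots (alpha j) (dformula_neq0 alpha k_ge2) (gap_root_exists hj hjk hlt).
by rewrite in_itv.
Qed.

Lemma gap_root_bounds k j : (1 <= j)%N -> (j < k <= p)%N ->
  alpha j <= gap_root k j <= alpha j.+1.
Proof.
move=> hj hjk; case: (ltP (alpha j) (alpha j.+1)) => hvw.
  by have [/andP [h1 h2] _] := gap_root_strict hj hjk hvw; rewrite !ltW.
by rewrite gap_root_flat // lexx alpha_step //; lia.
Qed.

Lemma gap_root_gt0 k j : (1 <= j)%N -> (j < k <= p)%N -> 0 < gap_root k j.
Proof.
move=> hj hjk; have /andP [h _] := gap_root_bounds hj hjk.
by apply: lt_le_trans h; apply: alpha_gt0; lia.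
Qed.

Lemma root_seq_sorted k : (2 <= k <= p)%N -> sorted <=%R (root_seq k).
Proof.
move=> hk; have [hk2 hkp] := andP hk.
apply/(sortedP 0) => i; rewrite size_root_seq ?(ltnW hk2) // => hi.
case: i hi => [|i] hi.
  rewrite (nth_root_seq (j := 1)) ?hk2 //=; apply: ltW.
  by apply: lt_trans (proj1 (neg_rootP hk)) (gap_root_gt0 _ _); rewrite ?hk2.
rewrite !nth_root_seq; try lia.
have /andP [_ h1] : alpha i.+1 <= gap_root k i.+1 <= alpha i.+2.
  by apply: gap_root_bounds; lia.
have /andP [h2 _] : alpha i.+2 <= gap_root k i.+2 <= alpha i.+3.
  by apply: gap_root_bounds; lia.
exact: le_trans h1 h2.
Qed.

Lemma count_root_seq_alpha k m : (2 <= k <= p)%N -> (1 <= m <= k)%N ->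
  (count_mem (alpha m) (root_seq k) <=
   count (fun j => (alpha j == alpha j.+1) && (alpha j == alpha m)) (iota 1 k.-1))%N.
Proof.
move=> hk hm; have [hk2 hkp] := andP hk.
have neg_lt : neg_root k < alpha m.
  by apply: lt_trans (proj1 (neg_rootP hk)) (alpha_gt0 _); lia.
rewrite /= (lt_eqF neg_lt) add0n count_map.
apply: sub_in_count => j; rewrite mem_iota => hj /eqP /= hjm.
have hj1 : (1 <= j)%N by lia.
have hjk : (j < k <= p)%N by rewrite hkp andbT; lia.
case: (ltP (alpha j) (alpha j.+1)) => hvw.
  have [/andP [h1 h2] _] := gap_root_strict hj1 hjk hvw; rewrite hjm in h1 h2.
  case: (leqP m j) => hmj; first by move: h1; rewrite ltNge alpha_le //; lia.
  by move: h2; rewrite ltNge alpha_le //; lia.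
have flat : alpha j = alpha j.+1 by apply/le_anti; rewrite hvw alpha_step //; lia.
by rewrite -flat eqxx -hjm gap_root_flat // eqxx.
Qed.

Section NonAlphaValue.
Variables (k : nat) (y : R).
Hypothesis hk : (2 <= k <= p)%N.
Hypothesis y_nonalpha : forall l, (1 <= l <= k)%N -> alpha l != y.

Lemma gap_root_nonalpha j : (1 <= j < k)%N -> gap_root k j = y ->
  alpha j < y < alpha j.+1 /\ root (dformula alpha k) y.
Proof.
move=> hj hjy; have [hk2 hkp] := andP hk.
have hjk : (j < k <= p)%N by rewrite hkp andbT; lia.
case: (ltP (alpha j) (alpha j.+1)) => hvw; first by rewrite -hjy; apply: gap_root_strict => //; lia.
have := y_nonalpha (l := j); rewrite -hjy gap_root_flat // eqxx => /(_ _)/negP[]; lia.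
Qed.

Lemma root_seq_nonalpha_root : y \in root_seq k -> root (dformula alpha k) y.
Proof.
rewrite in_cons => /orP [/eqP ->|/mapP [j]]; first exact: (proj2 (neg_rootP hk)).
by rewrite mem_iota => hj /esym /(gap_root_nonalpha _) []; lia.
Qed.

Lemma count_root_seq_nonalpha : (count_mem y (root_seq k) <= 1)%N.
Proof.
have gap_y j : j \in iota 1 k.-1 -> gap_root k j == y ->
    (alpha j < y < alpha j.+1) && (1 <= j < k)%N.
  rewrite mem_iota => hj /eqP gy; have hjk : (1 <= j < k)%N by lia.
  by have [-> _] := gap_root_nonalpha hjk gy.
rewrite /= count_map; case: (neg_root k =P y) => [neg_y|_].
  suff -> : count (fun j => gap_root k j == y) (iota 1 k.-1) = 0%N by [].
  apply/eqP; rewrite eqn0Ngt -has_count; apply/hasPn => j; rewrite mem_iota -neg_y => hj.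
  apply: contraTneq (proj1 (neg_rootP hk)) => <-.
  by rewrite -leNgt ltW // gap_root_gt0; case/andP: hk; lia.
rewrite add0n; apply: count_le1 (iota_uniq _ _) _ => i j hi hj /(gap_y _ hi) hyi /(gap_y _ hj) hyj.
wlog lt_ij : i j hi hj hyi hyj / (i < j)%N.
  move=> H; case: (ltngtP i j) => [ij|ji|//]; first exact: H.
  by apply/esym; apply: H.
move: hyi hyj => /andP [/andP [_ hyi] _] /andP [/andP [hyj _] /andP [_ hjk]].
have : alpha i.+1 <= alpha j by apply: alpha_le; case/andP: hk; lia.
by rewrite leNgt (lt_trans hyj hyi).
Qed.
End NonAlphaValue.

Lemma root_seq_dvdp k : (2 <= k <= p)%N ->
  \prod_(x <- root_seq k) ('X - x%:P) %| dformula alpha k.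
Proof.
move=> hk; have k_gt0 : (0 < k)%N by case/andP: hk; lia.
apply: prod_XsubC_dvdp => y.
case: (boolP (has (fun l => alpha l == y) (index_iota 1 k.+1))) => [/hasP [m hm /eqP <-]|].
  rewrite mem_index_iota ltnS in hm.
  exact: dvdp_trans (dvdp_exp2l _ (count_root_seq_alpha hk hm)) (repeats_dvd_dformula _ _ k_gt0).
move=> /hasPn y_nonalpha.
have {}y_nonalpha l : (1 <= l <= k)%N -> alpha l != y.
  by move=> hl; apply: y_nonalpha; rewrite mem_index_iota ltnS.
have := count_root_seq_nonalpha hk y_nonalpha; rewrite leq_eqVlt ltnS leqn0.
case/orP=> /eqP cnt; rewrite cnt ?dvd1p // expr1 dvdp_XsubCl.
apply: (root_seq_nonalpha_root hk y_nonalpha).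
by rewrite -has_pred1 has_count cnt.
Qed.

Lemma dformula_root_seq k : (2 <= k <= p)%N ->
  dformula alpha k = lead_coef (dformula alpha k) *: \prod_(x <- root_seq k) ('X - x%:P).
Proof.
move=> hk; have [hk2 _] := andP hk.
by apply: prod_XsubC_dvdp_eq (root_seq_dvdp hk) _; rewrite size_dformula // size_root_seq // ltnW.
Qed.

Lemma root_dformula k x : (2 <= k <= p)%N -> root (dformula alpha k) x = (x \in root_seq k).
Proof.
move=> hk; have [hk2 _] := andP hk.
rewrite [in LHS](dformula_root_seq hk) rootZ ?root_prod_XsubC //.
by rewrite lead_coef_eq0 dformula_neq0.
Qed.

Lemma root_seq2 : (2 <= p)%N ->
  root_seq 2 = [:: - Num.sqrt (alpha 1%N * alpha 2%N); Num.sqrt (alpha 1%N * alpha 2%N)].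
Proof.
move=> hp; have h2 : (2 <= 2 <= p)%N by rewrite leqnn.
have sqrt_root x : x \in root_seq 2 -> Num.sqrt (alpha 1%N * alpha 2%N) = `|x|.
  rewrite -root_dformula // /root horner_dformula dform2 subr_eq0 => /eqP ->.
  by rewrite sqrtr_sqr.
have [neg_lt0 _] := neg_rootP h2.
rewrite /root_seq /=; congr [:: _; _].
  by rewrite (sqrt_root (neg_root 2)) ?mem_head // ltr0_norm ?opprK.
by rewrite (sqrt_root (gap_root 2 1)) ?inE ?eqxx ?orbT // gtr0_norm // gap_root_gt0.
Qed.

Lemma neg_root_le k : (2 <= k < p)%N -> neg_root k <= neg_root k.+1.
Proof.
case/andP=> hk2 hkp; have hk : (2 <= k <= p)%N by rewrite hk2 ltnW.
have hk' : (2 <= k.+1 <= p)%N by rewrite hkp ltnW.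
have [c_lt0 c_root] := neg_rootP hk; set c := neg_root k in c_lt0 c_root *.
have d0_gt0 := dform0_gt0 hkp; rewrite -horner_dformula in d0_gt0.
have dc0 : dform alpha c k = 0 by rewrite -horner_dformula; apply/rootP.
(* d_(k+1)(c) = c P_k(c) < 0 < d_(k+1)(0) *)
have sign : (dformula alpha k.+1).[c] <= 0 <= (dformula alpha k.+1).[0].
  rewrite (ltW d0_gt0) andbT horner_dformula dformS dc0 mulr0 add0r.
  rewrite nmulr_rle0 // ltW // shifted_prod_gt0 ?(ltnW hkp) //.
  by apply: lt_trans c_lt0 _; move: alpha1_gt0.
have [y /andP [cy y_le0] y_root] := poly_ivt (ltW c_lt0) sign.
move: y_root; rewrite root_dformula // => /mem_root_seqP [<- //|[j hj y_gap]].
have : 0 < y by rewrite y_gap gap_root_gt0 //; case/andP: hj; lia.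
by rewrite ltNge y_le0.
Qed.

Lemma gap_root1_le k : (2 <= k < p)%N -> gap_root k.+1 1 <= gap_root k 1.
Proof.
case/andP=> hk2 hkp; have hk : (2 <= k <= p)%N by rewrite hk2 ltnW.
have hk' : (2 <= k.+1 <= p)%N by rewrite hkp ltnW.
have /andP [x_ge x_le] : alpha 1%N <= gap_root k 1 <= alpha 2%N.
  by apply: gap_root_bounds; lia.
set x := gap_root k 1 in x_ge x_le *.
have dx0 : dform alpha x k = 0.
  rewrite -horner_dformula; apply/rootP; rewrite root_dformula // /x.
  by rewrite -(nth_root_seq (j := 1)) ?hk2 // mem_nth // size_root_seq // ltnW.
(* d_(k+1)(x) = x P_k(x) <= 0 <= d_(k+1)(alpha_1), as alpha_1 <= x <= alpha_2 *)
have sign : (- dformula alpha k.+1).[alpha 1%N] <= 0 <= (- dformula alpha k.+1).[x].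
  rewrite !hornerN !horner_dformula oppr_le0 dform_alpha1_ge0 /=; last by rewrite hkp; lia.
  rewrite oppr_ge0.
  rewrite dformS dx0 mulr0 add0r pmulr_rle0; last by apply: lt_le_trans x_ge.
  rewrite /shifted_prod big_ltn; last lia.
  apply: mulr_le0_ge0; first by rewrite subr_le0.
  rewrite big_seq; apply: prodr_ge0 => l; rewrite mem_index_iota subr_ge0 => hl.
  by apply: le_trans x_le (alpha_le _ _); lia.
have [y /andP [y_ge y_le]] := poly_ivt x_ge sign.
rewrite rootN root_dformula // => /mem_root_seqP [y_neg|[j hj y_gap]].
  have := proj1 (neg_rootP hk'); rewrite -y_neg ltNge.
  by rewrite (ltW (lt_le_trans alpha1_gt0 y_ge)).
apply: le_trans y_le; rewrite y_gap -!nth_root_seq //; last lia.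
apply: (sorted_leq_nth le_trans lexx 0 (root_seq_sorted hk')); rewrite ?inE ?size_root_seq //; lia.
Qed.
End RootLocation.

Theorem lemma1 (R : rcfType) (p : nat) (alpha : nat -> R) :
  (2 <= p)%N ->
  (forall (k : nat) (hk : (k <= p)%N), (1 <= k)%N ->
     dpoly alpha hk = dformula alpha k /\
     (forall c : R, (dpoly alpha hk).[c] = lead_minor (Bmat p alpha c) hk)) /\
  (forall (k : nat) (hk : (k <= p)%N), (2 <= k)%N ->
     size (dpoly alpha hk) = k.+1) /\
  (0 < alpha 1%N ->
   (forall i : nat, (1 <= i < p)%N -> alpha i <= alpha i.+1) ->
   alpha p < 1 ->
   exists r : nat -> seq R,
     (forall (k : nat) (hk : (k <= p)%N), (2 <= k)%N ->
        [/\ size (r k) = k,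
            sorted <=%R (r k),
            dpoly alpha hk = lead_coef (dpoly alpha hk) *: \prod_(x <- r k) ('X - x%:P),
            nth 0 (r k) 0 < 0 &
            (forall j : nat, (1 <= j < k)%N ->
               alpha j <= nth 0 (r k) j /\ nth 0 (r k) j <= alpha j.+1)]) /\
     nth 0 (r 2%N) 0 = - Num.sqrt (alpha 1%N * alpha 2%N) /\
     nth 0 (r 2%N) 1 = Num.sqrt (alpha 1%N * alpha 2%N) /\
     (forall k : nat, (2 <= k < p)%N ->
        nth 0 (r k) 0 <= nth 0 (r k.+1) 0 /\ nth 0 (r k.+1) 1 <= nth 0 (r k) 1) /\
     (forall k : nat, (2 <= k <= p)%N -> 0 < nth 0 (r k) 1)).
Proof.
move=> hp; split.
  by move=> k hk _; split; [exact: dpoly_dformula | exact: horner_dpoly].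
split; first by move=> k hk hk2; rewrite dpoly_dformula size_dformula.
move=> a1 astep ap; exists (root_seq alpha); split.
  move=> k hkp hk2; have hk : (2 <= k <= p)%N by rewrite hk2 hkp.
  rewrite dpoly_dformula size_root_seq ?(ltnW hk2) //; split => //.
  - exact: (root_seq_sorted a1 astep ap hk).
  - exact: (dformula_root_seq a1 astep ap hk).
  - exact: (proj1 (neg_rootP a1 astep ap hk)).
  - move=> j hj; rewrite nth_root_seq //.
    by apply/andP; apply: (gap_root_bounds a1 astep ap); lia.
rewrite (root_seq2 a1 astep ap hp); do 2 split => //; split.
  move=> k hk; rewrite !(@nth_root_seq _ _ _ 1); try lia.
  by split; [exact: (neg_root_le a1 astep ap) | exact: (gap_root1_le a1 astep ap)].
by move=> k hk; rewrite nth_root_seq; [apply: (gap_root_gt0 a1 astep ap) | ]; lia.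
Qed.
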